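(* Let $P$ be a simple $d$-polytope. (1) If $v$ is a vertex of $P$ then the interval $[P,v]=\{f\in\mathscr F(P): P\le f\le v\}$ is a Boolean lattice of rank $d$; in particular, facets $f_1,\dots,f_k$ with $\bigvee f_i<\varnothing$ are independent. (2) If $P$ is the $d$-cube or the $d$-permutohedron and $f_1,\dots,f_k\in\mathscr F(P)$ are independent facets with $\bigvee f_i=\varnothing$, then $k\le2$.
   Context: $\mathscr F(P)$ is the set of faces of the convex polytope $P$ (including $P$ and $\varnothing$) ordered by reverse inclusion, so $f_1\vee f_2=f_1\cap f_2$, the least element is $P$ and the greatest is $\varnothing$; the atoms are the facets. A $d$-polytope is simple if every vertex lies in exactly $d$ facets. A set $S$ of facets is independent if $\bigvee(S\setminus\{s\})<\bigvee S$ (i.e. $\bigcap(S\setminus\{s\})\supsetneq\bigcap S$) for every $s\in S$. The $d$-cube is the convex hull of $\{\sum_i\varepsilon_iv_i:\varepsilon_i=\pm1\}\subset\mathbb R^d$; the $d$-permutohedron is the convex hull of $\{\sum_i m_{i\pi}v_i:\pi\in\mathfrak S_{d+1}\}\subset\mathbb R^{d+1}$ for fixed integers $0\le m_1<\dots<m_{d+1}$. The Boolean lattice of rank $d$ is the lattice of subsets of a $d$-set. *)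

From HB Require Import structures.
From mathcomp Require Import all_boot all_order all_algebra all_fingroup.
From mathcomp Require Import boolp classical_sets.
From mathcomp Require Import reals.

Set Implicit Arguments.
Unset Strict Implicit.
Unset Printing Implicit Defensive.

Import Order.TTheory GRing.Theory Num.Theory.
Local Open Scope ring_scope.
Local Open Scope classical_set_scope.

Section Polytopes.
Variables (R : realType) (n : nat).
Notation pt := 'rV[R]_n.

Definition dot (c x : pt) : R := \sum_(i < n) c 0 i * x 0 i.

Definition conv (V : seq pt) : set pt :=
  [set x | exists w : 'I_(size V) -> R,
     (forall i, 0 <= w i) /\ \sum_i w i = 1 /\ x = \sum_i w i *: V`_i].

Definition is_polytope (P : set pt) : Prop := exists V : seq pt, P = conv V.

Definition aff_indep (k : nat) (x : 'I_k.+1 -> pt) : Prop :=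
  \rank (\matrix_(i < k) (x (lift ord0 i) - x ord0)) = k.

Definition affdim (S : set pt) (d : nat) : Prop :=
  (exists x : 'I_d.+1 -> pt, (forall i, S (x i)) /\ aff_indep x) /\
  (forall x : 'I_d.+2 -> pt, (forall i, S (x i)) -> ~ aff_indep x).

(* faces of P (including P itself and the empty face):
   intersections of P with supporting hyperplanes {c.x = b}, c.x <= b on P *)
Definition is_face (P F : set pt) : Prop :=
  exists (c : pt) (b : R), (forall x, P x -> dot c x <= b) /\
     F = [set x | P x /\ dot c x = b].

(* facets = atoms of the face lattice (ordered by reverse inclusion):
   faces F <> P such that no face lies strictly between P and F *)
Definition is_facet (P F : set pt) : Prop :=
  is_face P F /\ F <> P /\
  (forall G, is_face P G -> F `<=` G -> G = F \/ G = P).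

Definition is_vertex (P : set pt) (v : pt) : Prop := is_face P [set v].

Definition simple_polytope (P : set pt) (d : nat) : Prop :=
  is_polytope P /\ affdim P d /\
  forall v, is_vertex P v ->
    exists f : 'I_d -> set pt, injective f /\
      (forall i, is_facet P (f i) /\ f i v) /\
      (forall F, is_facet P F -> F v -> exists i, F = f i).

(* join in F(P) of a family of faces = intersection (join of nothing = P) *)
Definition fjoin (P : set pt) (k : nat) (f : 'I_k -> set pt) (I : set 'I_k) :
  set pt := P `&` \bigcap_(i in I) f i.

Definition independent (P : set pt) (k : nat) (f : 'I_k -> set pt) : Prop :=
  forall j : 'I_k, fjoin P f [set i | i != j] <> fjoin P f setT.

(* the interval [P, v] of F(P) is a Boolean lattice of rank d:
   order-isomorphic to the subsets of a d-set *)
Definition interval_boolean (P : set pt) (v : pt) (d : nat) : Prop :=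
  exists phi : {F : set pt | is_face P F /\ F v} -> {set 'I_d},
    bijective phi /\
    forall F G, (sval G `<=` sval F) <-> (phi F \subset phi G).

End Polytopes.

Definition cube (R : realType) (d : nat) : set 'rV[R]_d :=
  conv [seq (\row_(i < d) (if eps i then 1 else -1) : 'rV[R]_d)
       | eps : {ffun 'I_d -> bool}].

Definition permutohedron (R : realType) (d : nat) (m : 'I_d.+1 -> nat)
  : set 'rV[R]_d.+1 :=
  conv [seq (\row_(i < d.+1) ((m (pi i))%:R) : 'rV[R]_d.+1) | pi : 'S_d.+1].

(* At a vertex [v] of a simple d-polytope, every functional supporting the
   polytope at [v] is a nonnegative combination of the normals of the d facets
   through [v], and these normals are linearly independent because the
   polytope is d-dimensional.  Hence every face through [v] is the
   intersection of the facets containing it, and distinct sets of facets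
   through [v] cut out distinct faces: [[P, v]] is Boolean, and facets with a
   common vertex are independent.  A nonempty intersection of facets contains
   a vertex, which settles (1).
   For (2): if an independent family with empty join has at least three
   members, any two of them meet, since otherwise a third could be dropped.
   The facets of the cube are the sides [x_i = +-1], and pairwise meeting
   sides never use both signs of a coordinate, so they share a vertex.  The
   facets of the permutohedron maximise [\sum_(i in S) x_i]; two of them meet
   only if their index sets are nested, and the members of a chain are upper
   sets for a single permutation, whose vertex lies on all of them. *)

From mathcomp Require Import all_boot all_order all_algebra all_fingroup.
From mathcomp Require Import boolp classical_sets.
From mathcomp Require Import reals.
From mathcomp Require Import ring lra.

Set Implicit Arguments.
Unset Strict Implicit.
Unset Printing Implicit Defensive.

Import Order.TTheory GRing.Theory Num.Theory.
Local Open Scope ring_scope.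
Local Open Scope classical_set_scope.

Section Dot.
Variables (R : realType) (n : nat).
Local Notation pt := 'rV[R]_n.

Lemma dotDr (c x y : pt) : dot c (x + y) = dot c x + dot c y.
Proof. by rewrite /dot -big_split; apply: eq_bigr => i _; rewrite mxE mulrDr. Qed.

Lemma dotDl (c c' x : pt) : dot (c + c') x = dot c x + dot c' x.
Proof. by rewrite /dot -big_split; apply: eq_bigr => i _; rewrite mxE mulrDl. Qed.

Lemma dotZr (c x : pt) a : dot c (a *: x) = a * dot c x.
Proof. by rewrite /dot mulr_sumr; apply: eq_bigr => i _; rewrite mxE mulrCA. Qed.

Lemma dotZl (c x : pt) a : dot (a *: c) x = a * dot c x.
Proof. by rewrite /dot mulr_sumr; apply: eq_bigr => i _; rewrite mxE mulrA. Qed.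

Lemma dot0r (c : pt) : dot c 0 = 0.
Proof. by rewrite /dot big1 // => i _; rewrite mxE mulr0. Qed.

Lemma dot0l (c : pt) : dot 0 c = 0.
Proof. by rewrite /dot big1 // => i _; rewrite mxE mul0r. Qed.

Lemma dotNr (c x : pt) : dot c (- x) = - dot c x.
Proof. by rewrite -scaleN1r dotZr mulN1r. Qed.

Lemma dotNl (c x : pt) : dot (- c) x = - dot c x.
Proof. by rewrite -scaleN1r dotZl mulN1r. Qed.

Lemma dotBr (c x y : pt) : dot c (x - y) = dot c x - dot c y.
Proof. by rewrite dotDr dotNr. Qed.

Lemma dotBl (c c' x : pt) : dot (c - c') x = dot c x - dot c' x.
Proof. by rewrite dotDl dotNl. Qed.

Lemma dot_sumr (I : Type) (r : seq I) (Q : pred I) (F : I -> pt) (c : pt) :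
  dot c (\sum_(i <- r | Q i) F i) = \sum_(i <- r | Q i) dot c (F i).
Proof. exact: (big_morph (dot c) (dotDr c) (dot0r c)). Qed.

Lemma dot_suml (I : Type) (r : seq I) (Q : pred I) (F : I -> pt) (x : pt) :
  dot (\sum_(i <- r | Q i) F i) x = \sum_(i <- r | Q i) dot (F i) x.
Proof. by apply: (big_morph (fun c => dot c x)) => [c c'|]; rewrite ?dotDl ?dot0l. Qed.

Lemma dotC (x y : pt) : dot x y = dot y x.
Proof. by apply: eq_bigr => i _; rewrite mulrC. Qed.

Lemma dot_deltal (j : 'I_n) (x : pt) : dot (delta_mx 0 j) x = x 0 j.
Proof.
rewrite /dot (bigD1 j) //= big1 ?addr0 => [|i /negbTE ij].
  by rewrite mxE !eqxx mul1r.
by rewrite mxE ij andbF mul0r.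
Qed.

Lemma dotxx_gt0 (x : pt) : x != 0 -> 0 < dot x x.
Proof.
move=> nz_x; have [j xj] : exists j, x 0 j != 0.
  apply/existsP; apply: contraR nz_x; rewrite negb_exists => /forallP x0.
  by apply/eqP/rowP => j; rewrite mxE; apply/eqP/negbNE/x0.
rewrite /dot (bigD1 j) //=; apply: ltr_pwDl.
  by rewrite lt0r mulf_neq0 //= -expr2 sqr_ge0.
by rewrite sumr_ge0 // => i _; rewrite -expr2 sqr_ge0.
Qed.

Lemma dot_le_dotxx (p q : pt) : dot q q <= dot p p ->
  dot p q <= dot p p /\ (dot p q = dot p p -> q = p).
Proof.
move=> le_qp.
have E : dot (p - q) (p - q) = dot p p - 2 * dot p q + dot q q.
  by rewrite !dotBl !dotBr (dotC q p); ring.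
have [-> | neq_qp] := eqVneq q p; first by [].
have := dotxx_gt0 (x := p - q); rewrite subr_eq0 eq_sym neq_qp E => /(_ isT) ?.
by split=> [|?]; [lra | exfalso; lra].
Qed.

End Dot.

Section RealLemmas.
Variables (R : realType) (I : finType).

Lemma nsumr_eq0P (Q : pred I) (F : I -> R) :
  (forall i, Q i -> F i <= 0) -> \sum_(i | Q i) F i = 0 ->
  forall i, Q i -> F i = 0.
Proof.
move=> F_le0 sum0 i Qi; apply/eqP; rewrite -oppr_eq0; apply/eqP.
apply: (psumr_eq0P (F := fun i => - F i)) Qi => [j Qj|].
  by rewrite oppr_ge0 F_le0.
by rewrite sumrN sum0 oppr0.
Qed.

Lemma exists_dominating_multiple (s a : I -> R) :
  exists M, 0 <= M /\ forall u, s u < 0 -> a u + M * s u < 0.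
Proof.
exists (1 + \sum_u (`|a u| / `|s u|)); split.
  by rewrite addr_ge0 // sumr_ge0 // => u _; rewrite divr_ge0.
move=> u su_lt0; have su_gt0 : 0 < `|s u| by rewrite normr_gt0 ltr0_neq0.
have au_le : `|a u| / `|s u| <= \sum_u (`|a u| / `|s u|).
  by rewrite (bigD1 u) //= lerDl sumr_ge0 // => i _; rewrite divr_ge0.
have : `|a u| <= (\sum_u (`|a u| / `|s u|)) * `|s u| by rewrite -ler_pdivrMr.
rewrite (ltr0_norm su_lt0) => ?.
have := ler_norm (a u); rewrite mulrDl mul1r; nra.
Qed.

(* [e] is the largest step keeping [s - e * t] nonpositive: the least ratio
   [s u / t u], attained at [u0]. *)
Lemma min_ratio (s t : I -> R) :
  (forall u, s u <= 0) -> (forall u, t u <= 0) ->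
  (forall u, t u < 0 -> s u < 0) -> (exists u, t u < 0) ->
  exists e, [/\ 0 < e, exists2 u0, t u0 < 0 & s u0 = e * t u0
              & forall u, s u - e * t u <= 0].
Proof.
move=> s_le0 t_le0 ts [u1 tu1].
case: (@arg_minP _ R _ u1 (fun u => t u < 0) (fun u => s u / t u) tu1).
move=> u0 tu0 min_u0; exists (s u0 / t u0); split.
- by rewrite -divrNN divr_gt0 ?oppr_gt0 // ts.
- by exists u0 => //; rewrite divfK // ltr0_neq0.
move=> u; have [tu | tu] := ltP (t u) 0.
  have -> : s u = s u / t u * t u by rewrite divfK // ltr0_neq0.
  by rewrite subr_le0 ler_wnM2r ?min_u0 // ltW.
have -> : t u = 0 by apply/eqP; rewrite eq_le tu t_le0.
by rewrite mulr0 subr0.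
Qed.

End RealLemmas.

Section ConvexHull.
Variables (R : realType) (n : nat) (V : seq 'rV[R]_n).
Local Notation pt := 'rV[R]_n.
Local Notation N := (size V).
Local Notation P := (conv V).

Lemma conv_nth (u : 'I_N) : P V`_u.
Proof.
exists (fun i => (i == u)%:R); split; first by move=> i; rewrite ler0n.
split; first by rewrite (bigD1 u) //= eqxx big1 ?addr0 // => i /negbTE ->.
rewrite (bigD1 u) //= eqxx scale1r big1 ?addr0 // => i /negbTE ->.
by rewrite scale0r.
Qed.

Lemma conv_dotB (w : 'I_N -> R) (c : pt) b : \sum_i w i = 1 ->
  dot c (\sum_i w i *: V`_i) - b = \sum_i w i * (dot c V`_i - b).
Proof.
move=> w1; rewrite dot_sumr.
under [RHS]eq_bigr => i _ do rewrite mulrBr.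
by rewrite sumrB -mulr_suml w1 mul1r; under eq_bigr => i _ do rewrite dotZr.
Qed.

Lemma conv_dot_le (c : pt) b : (forall u : 'I_N, dot c V`_u <= b) ->
  forall x, P x -> dot c x <= b.
Proof.
move=> le_b x [w [w_ge0 [w1 ->]]]; rewrite -subr_le0 conv_dotB //.
by rewrite sumr_le0 // => i _; rewrite mulr_ge0_le0 // subr_le0.
Qed.

Lemma conv_dot_eq (c : pt) b : (forall u : 'I_N, dot c V`_u = b) ->
  forall x, P x -> dot c x = b.
Proof.
move=> eq_b x Px; apply/eqP; rewrite eq_le conv_dot_le //= => [|u]; last first.
  by rewrite eq_b.
by rewrite -lerN2 -dotNl conv_dot_le // => u; rewrite dotNl eq_b.
Qed.

Lemma conv_dot_eq_weight (c : pt) b (w : 'I_N -> R) :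
  (forall u : 'I_N, dot c V`_u <= b) -> (forall i, 0 <= w i) -> \sum_i w i = 1 ->
  dot c (\sum_i w i *: V`_i) = b -> forall u, 0 < w u -> dot c V`_u = b.
Proof.
move=> le_b w_ge0 w1 /eqP; rewrite -subr_eq0 conv_dotB // => /eqP sum0 u wu.
have := nsumr_eq0P (F := fun i => w i * (dot c V`_i - b)) _ sum0 (i := u) isT.
move=> /(_ _)/eqP; rewrite mulf_eq0 (gt_eqF wu) subr_eq0 => /(_ _)/eqP; apply.
by move=> i _; rewrite mulr_ge0_le0 // subr_le0.
Qed.

Lemma face_sub F : is_face P F -> F `<=` P.
Proof. by move=> [c [b [_ ->]]] x []. Qed.

Lemma face_nth_of_weight F (w : 'I_N -> R) : is_face P F ->
  (forall u, 0 <= w u) -> \sum_u w u = 1 -> F (\sum_u w u *: V`_u) ->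
  forall u, 0 < w u -> F V`_u.
Proof.
move=> [c [b [le_b ->]]] w_ge0 w1 [_ eq_b] u wu; split; first exact: conv_nth.
by apply: (conv_dot_eq_weight _ w_ge0 w1) => // i; apply: le_b; exact: conv_nth.
Qed.

Lemma faces_meet_at_nth F G x : is_face P F -> is_face P G -> F x -> G x ->
  exists u : 'I_N, F V`_u /\ G V`_u.
Proof.
move=> faceF faceG Fx Gx; have [w [w_ge0 [w1 xE]]] := face_sub faceF Fx.
have w_neq0 : \sum_u w u <> 0 by rewrite w1; exact/eqP/oner_neq0.
have [u /andP [_ wu]] := psumr_neq0P (fun u _ => w_ge0 u) w_neq0.
by rewrite xE in Fx Gx; exists u; split; apply: face_nth_of_weight wu.
Qed.

Lemma face_dot_eq F (a : pt) b : is_face P F ->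
  (forall u : 'I_N, F V`_u -> dot a V`_u = b) -> forall x, F x -> dot a x = b.
Proof.
move=> faceF eq_b x Fx; have [w [w_ge0 [w1 xE]]] := face_sub faceF Fx.
rewrite xE in Fx *; rewrite dot_sumr -[RHS]mul1r -w1 mulr_suml.
apply: eq_bigr => u _; rewrite dotZr.
have [wu | ] := ltP 0 (w u).
  by rewrite eq_b //; exact: face_nth_of_weight faceF w_ge0 w1 Fx u wu.
move=> wu_le0; have -> : w u = 0 by apply/eqP; rewrite eq_le wu_le0 w_ge0.
by rewrite !mul0r.
Qed.

Lemma face_eq_conv F : is_face P F -> (forall u : 'I_N, F V`_u) -> F = P.
Proof.
move=> faceF FV; have := faceF => -[c [b [_ FE]]].
apply/seteqP; split; first exact: face_sub.
move=> x Px; rewrite FE; split => //; apply: conv_dot_eq Px => u.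
by have := FV u; rewrite FE => -[].
Qed.

Lemma vertex_mem (Q : set pt) p : is_vertex Q p -> Q p.
Proof. by move=> [c [b [_ E]]]; have : [set p] p by []; rewrite E => -[]. Qed.

Lemma is_vertex_exposed (a : pt) b p : P p -> dot a p = b ->
  (forall u : 'I_N, dot a V`_u <= b /\ (dot a V`_u = b -> V`_u = p)) ->
  is_vertex P p.
Proof.
move=> Pp ap exposed; exists a, b; split.
  by apply: conv_dot_le => u; case: (exposed u).
apply/seteqP; split => x /=; first by move=> ->.
move=> [[w [w_ge0 [w1 xE]]] ax]; rewrite xE in ax *.
have tight := conv_dot_eq_weight (fun u => (exposed u).1) w_ge0 w1 ax.
have -> : \sum_i w i *: V`_i = \sum_i w i *: p.
  apply: eq_bigr => i _; have [wi | wi] := ltP 0 (w i).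
    by rewrite (exposed i).2 // tight.
  have -> : w i = 0 by apply/eqP; rewrite eq_le wi w_ge0.
  by rewrite !scale0r.
by rewrite -scaler_suml w1 scale1r.
Qed.

Lemma exists_vertex_on (c : pt) b : (forall u : 'I_N, dot c V`_u <= b) ->
  (exists u : 'I_N, dot c V`_u = b) -> exists2 p, is_vertex P p & dot c p = b.
Proof.
move=> le_b [u1 /eqP u1b].
case: (@arg_maxP _ R _ u1 (fun u => dot c V`_u == b) (fun u => dot V`_u V`_u) u1b).
move=> u0 /eqP u0b max_u0; set p := V`_u0; exists p => //.
(* [p] is a tight vertex of maximal norm; tilting [c] towards [p] exposes it. *)
have [M [M_ge0 HM]] := exists_dominating_multiple
  (fun u : 'I_N => dot c V`_u - b) (fun u => dot p V`_u - dot p p).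
apply: (@is_vertex_exposed (p + M *: c) (dot p p + M * b)) (conv_nth u0) _ _.
  by rewrite dotDl dotZl u0b.
move=> u; rewrite dotDl dotZl; have [lt_b | ] := ltP (dot c V`_u - b) 0.
  by have := HM u lt_b; split => [|?]; [lra | exfalso; lra].
rewrite subr_ge0 => ge_b; have cu : dot c V`_u = b by apply/eqP; rewrite eq_le le_b.
have [le_pp eq_p] := dot_le_dotxx (max_u0 u (introT eqP cu)).
by rewrite cu; split => [|?]; [lra | apply: eq_p; lra].
Qed.

Lemma face_has_vertex F x : is_face P F -> F x -> exists2 p, is_vertex P p & F p.
Proof.
move=> faceF Fx; have := faceF => -[c [b [le_b FE]]].
have [u [Fu _]] := faces_meet_at_nth faceF faceF Fx Fx.
have [p vp cp] : exists2 p, is_vertex P p & dot c p = b.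
  apply: exists_vertex_on => [u'|]; first by apply/le_b/conv_nth.
  by exists u; move: Fu; rewrite FE => -[].
by exists p; rewrite // FE; split => //; exact: vertex_mem vp.
Qed.

Lemma fjoin_face k (f : 'I_k -> set pt) :
  (forall i, is_face P (f i)) -> is_face P (fjoin P f setT).
Proof.
move=> face_f; have [c hc] := choice face_f; have [b hb] := choice hc.
exists (\sum_i c i), (\sum_i b i); split.
  by move=> x Px; rewrite dot_suml; apply: ler_sum => i _; apply: (hb i).1.
apply/seteqP; split => [x [Px fx] | x [Px cx]].
  split => //; rewrite dot_suml; apply: eq_bigr => i _.
  by have := fx i Logic.I; rewrite (hb i).2 => -[].
split => // i _; rewrite (hb i).2; split => //; apply/eqP; rewrite -subr_eq0.
apply/eqP; apply: (nsumr_eq0P (Q := predT) (F := fun i => dot (c i) x - b i)) => // [j _|].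
  by rewrite subr_le0 (hb j).1.
by rewrite sumrB -dot_suml cx subrr.
Qed.

End ConvexHull.

Section AtVertex.
Variables (R : realType) (n : nat) (V : seq 'rV[R]_n) (v : 'rV[R]_n).
Local Notation pt := 'rV[R]_n.
Local Notation N := (size V).
Local Notation P := (conv V).

Definition gap (c : pt) (u : 'I_N) : R := dot c V`_u - dot c v.

Definition supporting (c : pt) : Prop := forall u, gap c u <= 0.

Definition face_at (c : pt) : set pt := [set x | P x /\ dot c x = dot c v].

Definition neg_gaps (c : pt) : {set 'I_N} := [set u | gap c u < 0]%SET.

Hypothesis Pv : P v.

Lemma gapD c c' u : gap (c + c') u = gap c u + gap c' u.
Proof. by rewrite /gap !dotDl addrACA opprD. Qed.

Lemma gapZ t c u : gap (t *: c) u = t * gap c u.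
Proof. by rewrite /gap !dotZl mulrBr. Qed.

Lemma gapB c c' t u : gap (c - t *: c') u = gap c u - t * gap c' u.
Proof. by rewrite -scaleNr gapD gapZ mulNr. Qed.

Lemma gap_sum (I : finType) (Q : pred I) (F : I -> pt) u :
  gap (\sum_(i | Q i) F i) u = \sum_(i | Q i) gap (F i) u.
Proof. by rewrite /gap !dot_suml -sumrB. Qed.

Lemma dotB_gap x : P x -> exists w : 'I_N -> R, (forall u, 0 <= w u) /\
  forall c, dot c x - dot c v = \sum_u w u * gap c u.
Proof. by move=> [w [w_ge0 [w1 ->]]]; exists w; split => // c; rewrite conv_dotB. Qed.

Lemma supporting_le c : supporting c -> forall x, P x -> dot c x <= dot c v.
Proof. by move=> sc; apply: conv_dot_le => u; rewrite -subr_le0; apply: sc. Qed.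

Lemma face_at_face c : supporting c -> is_face P (face_at c).
Proof. by move=> sc; exists c, (dot c v); split => //; exact: supporting_le. Qed.

Lemma face_at_v c : face_at c v.
Proof. by []. Qed.

Lemma face_at_nth c (u : 'I_N) : face_at c V`_u <-> gap c u = 0.
Proof.
split=> [[_ cu] | /eqP]; first by rewrite /gap cu subrr.
by rewrite subr_eq0 => /eqP cu; split => //; exact: conv_nth.
Qed.

Lemma face_atP F : is_face P F -> F v -> exists c, supporting c /\ F = face_at c.
Proof.
move=> [c [b [le_b ->]]] [_ cv]; exists c; split; last by rewrite /face_at cv.
by move=> u; rewrite /gap cv subr_le0; apply/le_b/conv_nth.
Qed.

Lemma face_at_subset c c' : supporting c ->
  (forall u, gap c u = 0 -> gap c' u = 0) -> face_at c `<=` face_at c'.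
Proof.
move=> sc zer x [Px cx]; split => //.
have [w [w_ge0 Ew]] := dotB_gap Px.
have := Ew c; rewrite cx subrr => /esym sum0.
have w0 := nsumr_eq0P (fun u _ => mulr_ge0_le0 (w_ge0 u) (sc u)) sum0.
apply/eqP; rewrite -subr_eq0 Ew; apply/eqP/big1 => u _.
by have /eqP := w0 u isT; rewrite mulf_eq0 => /orP [/eqP -> | /eqP /zer ->];
  rewrite ?mul0r ?mulr0.
Qed.

Lemma face_at_eq_conv c : supporting c -> face_at c = P <-> forall u, gap c u = 0.
Proof.
move=> sc; split => [E u | zer]; first by apply/face_at_nth; rewrite E; exact: conv_nth.
apply/seteqP; split => [x [] // | x Px].
apply: (@face_at_subset 0) => [u | u _ |]; rewrite ?zer //.
  by rewrite /gap !dot0l subrr.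
by split; rewrite ?dot0l.
Qed.

Lemma supporting_neg c : supporting c -> face_at c <> P -> exists u, gap c u < 0.
Proof.
move=> sc neP; apply: contrapT => nneg; apply/neP/face_at_eq_conv => // u.
by apply/eqP; rewrite eq_le sc leNgt; apply/negP => ?; apply: nneg; exists u.
Qed.

Lemma neg_gaps_sub c c' : supporting c ->
  (forall u, gap c u = 0 -> gap c' u = 0) -> forall u, gap c' u < 0 -> gap c u < 0.
Proof.
move=> sc zer u c'u; rewrite lt_neqAle sc andbT; apply/eqP => /zer cu0.
by move: c'u; rewrite cu0 ltxx.
Qed.

Lemma neg_gaps_proper c c' u : supporting c ->
  (forall u, gap c u = 0 -> gap c' u = 0) -> gap c' u = 0 -> gap c u < 0 ->
  (#|neg_gaps c'| < #|neg_gaps c|)%N.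
Proof.
move=> sc zer c'u cu; apply: proper_card; rewrite properE; apply/andP; split.
  by apply/fintype.subsetP => w; rewrite !inE; exact: neg_gaps_sub.
by apply/fintype.subsetPn; exists u; rewrite inE ?c'u ?ltxx.
Qed.

Lemma supporting_sum (I : finType) (S : {pred I}) (c : I -> pt) :
  (forall i, supporting (c i)) -> supporting (\sum_(i in S) c i).
Proof. by move=> sc u; rewrite gap_sum sumr_le0 // => i _; exact: sc. Qed.

Lemma face_at_sum (I : finType) (S : {pred I}) (c : I -> pt) x :
  (forall i, supporting (c i)) ->
  face_at (\sum_(i in S) c i) x <-> P x /\ forall i, i \in S -> face_at (c i) x.
Proof.
move=> sc; split => [[Px cx] | [Px cx]]; split => //; last first.
  rewrite !dot_suml; apply: eq_bigr => i iS; by case: (cx i iS).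
move=> i iS; split => //; apply/eqP; rewrite -subr_eq0; apply/eqP.
apply: (nsumr_eq0P (F := fun i => dot (c i) x - dot (c i) v)) iS.
  by move=> j _; rewrite subr_le0 supporting_le.
by rewrite sumrB -!dot_suml cx subrr.
Qed.

Section FacetNormals.
Variables (d : nat) (a : 'I_d -> pt).
Hypothesis a_supporting : forall i, supporting (a i).
Hypothesis a_facet : forall i, is_facet P (face_at (a i)).
Hypothesis a_onto : forall F, is_facet P F -> F v -> exists i, F = face_at (a i).

Definition in_facet_cone (c : pt) : Prop :=
  exists2 lam : 'I_d -> R, (forall i, 0 <= lam i) &
    forall u, gap c u = \sum_i lam i * gap (a i) u.

Lemma in_facet_cone_normal i : in_facet_cone (a i).
Proof.
exists (fun j => (j == i)%:R) => [j | u]; first by rewrite ler0n.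
rewrite (bigD1 i) //= eqxx mul1r big1 ?addr0 // => j /negbTE ->.
by rewrite mul0r.
Qed.

Lemma in_facet_cone_add c c' e : 0 <= e ->
  in_facet_cone c -> in_facet_cone c' -> in_facet_cone (c + e *: c').
Proof.
move=> e_ge0 [l l_ge0 El] [l' l'_ge0 El']; exists (fun i => l i + e * l' i).
  by move=> i; rewrite addr_ge0 ?mulr_ge0.
move=> u; rewrite gapD gapZ El El' mulr_sumr -big_split /=.
by apply: eq_bigr => i _; rewrite mulrDl mulrA.
Qed.

(* A proper face at [v] is a facet or lies strictly inside a larger proper
   face; either way we get a coarser supporting functional. *)
Lemma coarser_supporting c : supporting c -> face_at c <> P ->
  exists c', [/\ supporting c', forall u, gap c u = 0 -> gap c' u = 0,
    face_at c' <> P & (exists i, c' = a i) \/ (#|neg_gaps c'| < #|neg_gaps c|)%N].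
Proof.
move=> sc neP; case: (pselect (is_facet P (face_at c))) => [facet_c | nfacet_c].
  have [i Ei] := a_onto facet_c (face_at_v c).
  exists (a i); split; [exact: a_supporting | | exact: (a_facet i).2.1 | by left; exists i].
  by move=> u /face_at_nth; rewrite Ei => /face_at_nth.
have [G [faceG subG neG]] : exists G, [/\ is_face P G, face_at c `<=` G &
    ~ (G = face_at c \/ G = P)].
  apply: contrapT => nG; apply/nfacet_c; split; first exact: face_at_face.
  by split=> // G faceG sub; apply: contrapT => ?; apply: nG; exists G.
have [c' [sc' GE]] := face_atP faceG (subG _ (face_at_v c)).
have zer u : gap c u = 0 -> gap c' u = 0.
  by move=> /face_at_nth /subG; rewrite GE => /face_at_nth.
exists c'; split => //; first by move=> E; apply: neG; right; rewrite GE.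
have [u c'u cu] : exists2 u, gap c' u = 0 & gap c u < 0.
  apply: contrapT => nu; apply: neG; left; rewrite GE.
  apply/seteqP; split; last exact: face_at_subset.
  apply: face_at_subset => // u c'u; apply/eqP; rewrite eq_le sc leNgt.
  by apply/negP => cu; apply: nu; exists u.
by right; apply: (neg_gaps_proper sc zer c'u cu).
Qed.

(* Induction on the number of vertices strictly below the hyperplane of [c]:
   subtracting the largest admissible multiple of a coarser functional makes
   one more vertex tight. *)
Lemma supporting_in_facet_cone c : supporting c -> in_facet_cone c.
Proof.
suff cone k : forall c, (#|neg_gaps c| < k)%N -> supporting c -> in_facet_cone c.
  by move=> sc; apply: (cone #|neg_gaps c|.+1).
elim: k => [// | k IH] {}c lt_k sc.
have [zer | /existsP [u1 nz_u1]] := boolP [forall u, gap c u == 0].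
  exists (fun=> 0) => // u; rewrite (eqP (forallP zer u)) big1 // => i _.
  by rewrite mul0r.
have neP : face_at c <> P.
  by move/(face_at_eq_conv sc)/(_ u1)/eqP; rewrite (negbTE nz_u1).
have [c' [sc' zer neP' gen_c']] := coarser_supporting sc neP.
have [e [e_gt0 [u0 c'u0 cu0] le0]] :=
  min_ratio sc sc' (neg_gaps_sub sc zer) (supporting_neg sc' neP').
have sc'' : supporting (c - e *: c') by move=> u; rewrite gapB.
have lt_c'' : (#|neg_gaps (c - e *: c')| < #|neg_gaps c|)%N.
  apply: (neg_gaps_proper (u := u0) sc) => [u cu0' | |].
  - by rewrite gapB cu0' zer // mulr0 subr0.
  - by rewrite gapB cu0 subrr.
  - by rewrite cu0 pmulr_rlt0.
rewrite -(subrK (e *: c') c); apply: in_facet_cone_add (ltW e_gt0) _ _.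
  exact: IH (leq_trans lt_c'' lt_k) sc''.
case: gen_c' => [[i ->] | lt_c']; first exact: in_facet_cone_normal.
exact: IH (leq_trans lt_c' lt_k) sc'.
Qed.

Hypothesis v_vertex : is_vertex P v.
Hypothesis P_dim : exists x : 'I_d.+1 -> pt, (forall i, P (x i)) /\ aff_indep x.

(* Adding a large multiple of a functional exposing [v] makes any [c] supporting. *)
Lemma gap_span c : exists mu : 'I_d -> R,
  forall u, gap c u = \sum_i mu i * gap (a i) u.
Proof.
have [c0 [sc0 E0]] := face_atP v_vertex (erefl v).
have zer u : gap c0 u = 0 -> gap c u = 0.
  by move=> /face_at_nth; rewrite -E0 /gap => /= ->; rewrite subrr.
have [M [_ HM]] := exists_dominating_multiple (gap c0) (gap c).
have sc1 : supporting (c + M *: c0).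
  move=> u; rewrite gapD gapZ; have [lt0 | ge0] := ltP (gap c0 u) 0.
    exact/ltW/HM.
  have c0u : gap c0 u = 0 by apply/eqP; rewrite eq_le sc0.
  by rewrite c0u zer // mulr0 addr0.
have [l1 _ El1] := supporting_in_facet_cone sc1.
have [l0 _ El0] := supporting_in_facet_cone sc0.
exists (fun i => l1 i - M * l0 i) => u.
rewrite -[c](addrK (M *: c0)) gapB El1 El0 mulr_sumr -sumrB.
by apply: eq_bigr => i _; rewrite mulrBl mulrA.
Qed.

(* The [d] affinely independent difference vectors factor through the
   coordinate gaps, which are combinations of the facet gaps by [gap_span]. *)
Lemma gap_matrix_rank : \rank (\matrix_(i < d, u < N) gap (a i) u) = d.
Proof.
set B := \matrix_(i, u) gap (a i) u.
pose A : 'M[R]_(N, n) := \matrix_(u, j) gap (delta_mx 0 j) u.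
have [x [Px x_indep]] := P_dim.
have [w Ew] : exists w : 'I_d.+1 -> 'I_N -> R,
    forall k c, dot c (x k) - dot c v = \sum_u w k u * gap c u.
  have [w Ew] := choice (fun k => dotB_gap (Px k)).
  by exists w => k c; case: (Ew k) => _ ->.
have XA : (\matrix_(i < d) (x (lift ord0 i) - x ord0) <= A)%MS.
  apply/submxP; exists (\matrix_(i, u) (w (lift ord0 i) u - w ord0 u)).
  apply/matrixP => i j; rewrite !mxE.
  have := Ew (lift ord0 i) (delta_mx 0 j); have := Ew ord0 (delta_mx 0 j).
  rewrite !dot_deltal => E0 E1.
  have -> : x (lift ord0 i) 0 j - x ord0 0 j =
      (x (lift ord0 i) 0 j - v 0 j) - (x ord0 0 j - v 0 j) by ring.
  rewrite E0 E1 -sumrB.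
  by apply: eq_bigr => u _; rewrite !mxE mulrBl.
have AB : (A^T <= B)%MS.
  have [mu Emu] := choice (fun j : 'I_n => gap_span (delta_mx 0 j)).
  apply/submxP; exists (\matrix_(j, i) mu j i); apply/matrixP => j u.
  by rewrite !mxE Emu; apply: eq_bigr => i _; rewrite !mxE.
apply/eqP; rewrite eqn_leq rank_leq_row -{1}x_indep.
by rewrite (leq_trans (mxrankS XA)) // -mxrank_tr mxrankS.
Qed.

Lemma gap_indep (mu : 'I_d -> R) :
  (forall u, \sum_i mu i * gap (a i) u = 0) -> forall i, mu i = 0.
Proof.
move=> mu0; have B_free : row_free (\matrix_(i < d, u < N) gap (a i) u).
  by rewrite /row_free gap_matrix_rank.
have : (\row_i mu i) *m (\matrix_(i < d, u < N) gap (a i) u) == 0.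
  apply/eqP/matrixP => k u; rewrite !mxE -[RHS](mu0 u).
  by apply: eq_bigr => i _; rewrite !mxE.
by rewrite mulmx_free_eq0 // => /eqP /matrixP mu_0 i; have := mu_0 0 i; rewrite !mxE.
Qed.

(* Otherwise [\sum_(i in T) a i - e *: a j] would be supporting for some
   [e > 0], and its facet-cone expansion would contradict [gap_indep]. *)
Lemma exists_nth_off_facet (T : pred 'I_d) j : ~~ T j ->
  exists u, (forall i, T i -> gap (a i) u = 0) /\ gap (a j) u < 0.
Proof.
move=> Tj; apply: contrapT => none.
pose s := \sum_(i in T) a i; have ss : supporting s := supporting_sum T a_supporting.
have ts u : gap (a j) u < 0 -> gap s u < 0.
  move=> ju; rewrite lt_neqAle ss andbT; apply/eqP; rewrite gap_sum => s0.
  apply: none; exists u; split => //.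
  by apply: (nsumr_eq0P (F := fun i => gap (a i) u)) s0 => i _; exact: a_supporting.
have [e [e_gt0 _ le0]] := min_ratio ss (a_supporting j) ts
  (supporting_neg (a_supporting j) (a_facet j).2.1).
have sc : supporting (s - e *: a j) by move=> u; rewrite gapB.
have [lam lam_ge0 Elam] := supporting_in_facet_cone sc.
have rel u : \sum_i ((T i)%:R - (i == j)%:R * e - lam i) * gap (a i) u = 0.
  under eq_bigr => i _ do rewrite !mulrBl mulrAC.
  rewrite !sumrB -Elam gapB gap_sum.
  have -> : \sum_i (T i)%:R * gap (a i) u = \sum_(i in T) gap (a i) u.
    rewrite [RHS]big_mkcond; apply: eq_bigr => i _.
    by rewrite unfold_in; case: (T i); rewrite ?mul1r ?mul0r.
  rewrite [\sum_i (_ == j)%:R * _ * e](bigD1 j) //= eqxx mul1r.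
  rewrite [\sum_(i | i != j) _]big1 => [|i /negbTE ->]; last by rewrite !mul0r.
  by rewrite addr0 (mulrC _ e) subrr.
have := gap_indep rel j; rewrite eqxx (negbTE Tj) mul1r sub0r => e_lam.
by have := lam_ge0 j; lra.
Qed.

Definition facets_of (F : set pt) : {set 'I_d} :=
  [set i | `[< F `<=` face_at (a i) >]]%SET.

Lemma face_at_of_facets c x : supporting c -> P x ->
  (forall i, face_at c `<=` face_at (a i) -> face_at (a i) x) -> face_at c x.
Proof.
move=> sc Px Fx; split => //.
have [lam lam_ge0 Elam] := supporting_in_facet_cone sc.
have [w [w_ge0 Ew]] := dotB_gap Px.
apply/eqP; rewrite -subr_eq0 Ew; under eq_bigr => u _ do rewrite Elam mulr_sumr.
rewrite exchange_big /=; apply/eqP/big1 => i _.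
under eq_bigr => u _ do rewrite mulrCA; rewrite -mulr_sumr -Ew.
have [lam_gt0 | le0] := ltP 0 (lam i); last first.
  have -> : lam i = 0 by apply/eqP; rewrite eq_le le0 lam_ge0.
  by rewrite mul0r.
suff [_ ->] : face_at (a i) x by rewrite subrr mulr0.
apply: Fx; apply: face_at_subset => // u cu.
have /eqP := nsumr_eq0P (fun i _ => mulr_ge0_le0 (lam_ge0 i) (a_supporting i u))
  (esym (etrans (esym cu) (Elam u))) (i := i) isT.
by rewrite mulf_eq0 (gt_eqF lam_gt0) => /eqP.
Qed.

Lemma face_at_facets_of F : is_face P F -> F v ->
  F = face_at (\sum_(i in facets_of F) a i).
Proof.
move=> faceF Fv; have [c [sc EF]] := face_atP faceF Fv.
apply/seteqP; split => x.
  move=> Fx; apply/face_at_sum => //; split; first exact: face_sub faceF _ Fx.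
  by move=> i; rewrite inE => /asboolP; apply.
move=> /face_at_sum -/(_ a_supporting) [Px Fx]; rewrite EF.
by apply: face_at_of_facets => // i sub; apply: Fx; rewrite inE; apply/asboolP; rewrite EF.
Qed.

Lemma facets_of_face_at_sum (S : {set 'I_d}) : facets_of (face_at (\sum_(i in S) a i)) = S.
Proof.
apply/setP => i; rewrite inE; apply/asboolP/idP => [sub | iS]; last first.
  by move=> x /face_at_sum -/(_ a_supporting) [_]; apply.
apply: contraT => iS; have [u [Su iu]] := exists_nth_off_facet (T := mem S) iS.
have : face_at (\sum_(i in S) a i) V`_u.
  apply/face_at_sum => //; split => [|k kS]; first exact: conv_nth.
  exact/face_at_nth/Su.
by move=> /sub /face_at_nth iu0; move: iu; rewrite iu0 ltxx.
Qed.

Lemma interval_boolean_at : interval_boolean P v d.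
Proof.
pose phi (F : {F : set pt | is_face P F /\ F v}) := facets_of (sval F).
have psiP (S : {set 'I_d}) :
    is_face P (face_at (\sum_(i in S) a i)) /\ face_at (\sum_(i in S) a i) v.
  by split; [exact/face_at_face/supporting_sum | exact: face_at_v].
exists phi; split.
  exists (fun S => exist (fun F => is_face P F /\ F v) _ (psiP S)).
    by move=> [F [faceF Fv]]; apply: eq_exist; rewrite /phi /= -face_at_facets_of.
  exact: facets_of_face_at_sum.
move=> [F [faceF Fv]] [G [faceG Gv]]; rewrite /phi /=.
split => [GF | /fintype.subsetP sub].
  by apply/fintype.subsetP => i; rewrite !inE => FG x /GF /FG.
move=> x Gx; rewrite (face_at_facets_of faceF Fv); apply/face_at_sum => //.
split=> [|i /sub]; first exact: face_sub faceG _ Gx.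
by rewrite inE => /asboolP; apply.
Qed.

Lemma independent_at k (f : 'I_k -> set pt) : injective f ->
  (forall i, is_facet P (f i)) -> (forall i, f i v) -> independent P f.
Proof.
move=> f_inj f_facet fv j E.
have [idx Eidx] := choice (fun i => a_onto (f_facet i) (fv i)).
pose T l := [exists i, (i != j) && (idx i == l)].
have Tj : ~~ T (idx j).
  apply/existsP => -[i /andP [ij /eqP idx_ij]].
  by move: ij; rewrite (f_inj i j) ?eqxx // !Eidx idx_ij.
have [u [Tu ju]] := exists_nth_off_facet Tj.
have : fjoin P f [set i | i != j] V`_u.
  split => [|i /= ij]; first exact: conv_nth.
  by rewrite Eidx; apply/face_at_nth/Tu/existsP; exists i; rewrite ij eqxx.
rewrite E => -[_ /(_ j Logic.I)]; rewrite Eidx => /face_at_nth ju0.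
by move: ju; rewrite ju0 ltxx.
Qed.

End FacetNormals.
End AtVertex.

Section SimplePolytope.
Variables (R : realType) (n : nat).
Local Notation pt := 'rV[R]_n.

Lemma simple_facet_normals (V : seq pt) d v : is_vertex (conv V) v ->
  (exists f : 'I_d -> set pt, injective f /\
     (forall i, is_facet (conv V) (f i) /\ f i v) /\
     (forall F, is_facet (conv V) F -> F v -> exists i, F = f i)) ->
  exists a : 'I_d -> pt, [/\ forall i, supporting V v (a i),
    forall i, is_facet (conv V) (face_at V v (a i)) &
    forall F, is_facet (conv V) F -> F v -> exists i, F = face_at V v (a i)].
Proof.
move=> v_vertex [f [_ [f_facet f_onto]]].
have [a Ea] := choice (fun i => face_atP (f_facet i).1.1 (f_facet i).2).
exists a; split => [i | i | F F_facet Fv]; first by case: (Ea i).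
  by case: (Ea i) => _ <-; exact: (f_facet i).1.
by have [i ->] := f_onto F F_facet Fv; exists i; case: (Ea i).
Qed.

Lemma simple_interval_boolean d (P : set pt) v :
  simple_polytope P d -> is_vertex P v -> interval_boolean P v d.
Proof.
move=> [[V ->] [[P_dim _] simple]] v_vertex.
have [a [a_supp a_facet a_onto]] := simple_facet_normals v_vertex (simple v v_vertex).
exact: (interval_boolean_at (vertex_mem v_vertex) a_supp a_facet a_onto).
Qed.

Lemma simple_independent d (P : set pt) k (f : 'I_k -> set pt) :
  simple_polytope P d -> injective f -> (forall i, is_facet P (f i)) ->
  fjoin P f setT <> set0 -> independent P f.
Proof.
move=> [[V ->] [[P_dim _] simple]] f_inj f_facet /eqP /set0P [x fx].
have [w w_vertex fw] := face_has_vertex (fjoin_face (fun i => (f_facet i).1)) fx.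
have [a [a_supp a_facet a_onto]] := simple_facet_normals w_vertex (simple w w_vertex).
apply: (independent_at (vertex_mem w_vertex) a_supp a_facet a_onto w_vertex P_dim) => //.
by move=> i; case: fw => _; apply.
Qed.

End SimplePolytope.

Lemma exists_ord_notin k (s : seq 'I_k) : (size s < k)%N -> exists l, l \notin s.
Proof.
move=> lt_s; apply: contrapT => all_s; move: lt_s; apply/negP; rewrite -leqNgt.
rewrite -{1}(card_ord k) (leq_trans _ (card_size s)) // subset_leq_card //.
by apply/fintype.subsetP => l _; apply: contrapT => ?; apply: all_s; exists l; exact/negP.
Qed.

Section IndependentFacets.
Variables (R : realType) (n : nat).
Local Notation pt := 'rV[R]_n.

(* If two members of an independent family with empty join were disjoint,
   dropping a third member would not change the join. *)
Lemma independent_empty_join_le2 (P : set pt) k (f : 'I_k -> set pt) :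
  ((1 < k)%N -> (forall j j', j != j' -> exists x, f j x /\ f j' x) ->
    fjoin P f setT !=set0) ->
  independent P f -> fjoin P f setT = set0 -> (k <= 2)%N.
Proof.
move=> helly f_indep join0; rewrite leqNgt; apply/negP => lt2k.
have [j j' jj' | x] := helly (ltnW lt2k); last by rewrite join0.
apply: contrapT => disjoint.
have [l] := exists_ord_notin (s := [:: j; j']) lt2k; rewrite !inE negb_or.
move=> /andP [lj lj']; apply: (f_indep l); rewrite join0.
apply/seteqP; split => // x [_ fx]; apply: disjoint; exists x.
by split; apply: fx; rewrite /= eq_sym.
Qed.

End IndependentFacets.

Section HullOfImage.
Variables (R : realType) (n : nat) (T : finType) (F : T -> 'rV[R]_n).
Local Notation V := [seq F x | x : T].

Lemma nth_image_enum (u : 'I_(size V)) : exists t, V`_u = F t.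
Proof. by have /mapP [t _ ->] := mem_nth 0 (ltn_ord u); exists t. Qed.

Lemma conv_image_enum t : conv V (F t).
Proof.
have Vt : F t \in V by apply: map_f; rewrite mem_enum.
have lt_t : (index (F t) V < size V)%N by rewrite index_mem.
by have := conv_nth (Ordinal lt_t); rewrite /= nth_index.
Qed.

End HullOfImage.

Section Cube.
Variables (R : realType) (d : nat).
Local Notation pt := 'rV[R]_d.

Definition sgn (b : bool) : R := if b then 1 else -1.

Definition cube_vertex (e : {ffun 'I_d -> bool}) : pt := \row_i sgn (e i).

Local Notation V := [seq cube_vertex e | e : {ffun 'I_d -> bool}].
Local Notation P := (@cube R d).

Definition cube_side (i : 'I_d) (b : bool) : set pt := [set x | P x /\ x 0 i = sgn b].

Lemma sgn_inj : injective sgn.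
Proof. by case; case; rewrite /sgn // => ?; lra. Qed.

Lemma sgnK b : sgn b * sgn b = 1.
Proof. by case: b; rewrite /sgn ?mulr1 ?mulrNN ?mulr1. Qed.

Lemma cube_vertex_mem e : P (cube_vertex e).
Proof. exact: conv_image_enum. Qed.

Lemma dot_cube_vertex (c : pt) e : dot c (cube_vertex e) = \sum_j c 0 j * sgn (e j).
Proof. by apply: eq_bigr => j _; rewrite mxE. Qed.

Lemma dot_cube_vertex_flip (c : pt) (e : {ffun 'I_d -> bool}) i :
  dot c (cube_vertex [ffun j => if j == i then ~~ e i else e j]) =
  dot c (cube_vertex e) + c 0 i * (sgn (~~ e i) - sgn (e i)).
Proof.
rewrite !dot_cube_vertex (bigD1 i) //= [in RHS](bigD1 i) //= ffunE eqxx.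
under eq_bigr => j /negbTE ji do rewrite ffunE ji.
ring.
Qed.

Lemma cube_side_face i b : is_face P (cube_side i b).
Proof.
exists (sgn b *: delta_mx 0 i), 1; split.
  apply: conv_dot_le => u; have [e ->] := nth_image_enum u.
  by rewrite dotZl dot_deltal mxE; case: b; case: (e i); rewrite /sgn; lra.
apply/seteqP; split => x /=; rewrite dotZl dot_deltal => -[Px xi]; split => //.
  by rewrite xi sgnK.
by rewrite -[x 0 i]mul1r -(sgnK b) -mulrA xi mulr1.
Qed.

Lemma cube_side_neq i b : cube_side i b <> P.
Proof.
move=> E; have := cube_vertex_mem [ffun=> ~~ b]; rewrite -E => -[_] {E}.
by rewrite mxE ffunE; case: b; rewrite /sgn /= => ?; lra.
Qed.

(* Flipping coordinate [i] of a vertex on the face cannot increase [c]. *)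
Lemma cube_face_sub_side F (c : pt) b i : (forall x, P x -> dot c x <= b) ->
  F = [set x | P x /\ dot c x = b] -> c 0 i != 0 -> F `<=` cube_side i (0 < c 0 i).
Proof.
move=> le_b FE ci; have faceF : is_face P F by exists c, b.
have tight e : F (cube_vertex e) -> e i = (0 < c 0 i).
  rewrite FE => -[_ ce].
  have := le_b _ (cube_vertex_mem [ffun j => if j == i then ~~ e i else e j]).
  rewrite dot_cube_vertex_flip ce; case: (e i); rewrite /sgn /= => ?.
    by apply/esym; rewrite lt_neqAle eq_sym ci /=; lra.
  by apply/esym/negbTE; rewrite -leNgt; lra.
move=> x Fx; split; first exact: face_sub faceF _ Fx.
rewrite -dot_deltal; apply: (face_dot_eq faceF) Fx => u.
by have [e ->] := nth_image_enum u; rewrite dot_deltal mxE => /tight ->.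
Qed.

Lemma cube_facetP F : is_facet P F -> F = set0 \/ exists i b, F = cube_side i b.
Proof.
move=> [faceF [neP maxF]]; have := faceF => -[c [b [le_b FE]]].
case: (pselect (F !=set0)) => [[x Fx] | F0]; last first.
  by left; apply/seteqP; split => // y Fy; apply: F0; exists y.
right; case: (pselect (exists i, c 0 i != 0)) => [[i ci] | c0]; last first.
  have {}c0 : c = 0.
    by apply/rowP => j; rewrite mxE; apply/eqP/negPn/negP => cj; apply: c0; exists j.
  exfalso; apply/neP/(face_eq_conv faceF) => u; rewrite FE; split.
    exact: conv_nth.
  by move: Fx; rewrite FE c0 => -[_]; rewrite !dot0l.
have [E | E] := maxF _ (cube_side_face i (0 < c 0 i)) (cube_face_sub_side le_b FE ci).
  by exists i, (0 < c 0 i).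
by case: (cube_side_neq E).
Qed.

(* Pairwise meeting facets never use both sides of a coordinate, so a common
   vertex can be read off coordinatewise. *)
Lemma cube_facets_meet k (f : 'I_k -> set pt) : (1 < k)%N ->
  (forall i, is_facet P (f i)) ->
  (forall j j', j != j' -> exists x, f j x /\ f j' x) -> fjoin P f setT !=set0.
Proof.
move=> lt1k f_facet meet.
have side j : exists ib : 'I_d * bool, f j = cube_side ib.1 ib.2.
  case: (cube_facetP (f_facet j)) => [f0 | [i [b ->]]]; last by exists (i, b).
  have [j'] := exists_ord_notin (s := [:: j]) lt1k; rewrite inE eq_sym => jj'.
  by have [x [fx _]] := meet j j' jj'; rewrite f0 in fx.
have [ib Eib] := choice side.
have same_side j j' : (ib j).1 = (ib j').1 -> (ib j).2 = (ib j').2.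
  move=> eq1; have [<- // | jj'] := eqVneq j j'.
  have [x [fx fx']] := meet j j' jj'; move: fx fx'; rewrite !Eib eq1.
  by move=> [_ xj] [_]; rewrite xj => /sgn_inj.
pose e := [ffun i => if [pick j | (ib j).1 == i] is Some j then (ib j).2 else true].
exists (cube_vertex e); split => [|j _]; first exact: cube_vertex_mem.
rewrite Eib; split; first exact: cube_vertex_mem.
rewrite mxE ffunE; case: pickP => [j' /eqP /same_side -> // | none].
by have := none j; rewrite eqxx.
Qed.

Lemma cube_independent_le2 k (f : 'I_k -> set pt) :
  (forall i, is_facet P (f i)) -> independent P f -> fjoin P f setT = set0 ->
  (k <= 2)%N.
Proof.
by move=> f_facet; apply: independent_empty_join_le2 => lt1k; exact: cube_facets_meet.
Qed.

End Cube.

Section Permutohedron.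
Variables (R : realType) (d : nat) (m : 'I_d.+1 -> nat).
Hypothesis m_mono : forall i j : 'I_d.+1, (i < j)%N -> (m i < m j)%N.
Local Notation pt := 'rV[R]_d.+1.

Definition perm_vertex (s : 'S_d.+1) : pt := \row_i (m (s i))%:R.

Local Notation V := [seq perm_vertex s | s : 'S_d.+1].
Local Notation P := (@permutohedron R d m).

Definition upper_set (s : 'S_d.+1) (S : {set 'I_d.+1}) : Prop :=
  forall i j, i \in S -> (s i < s j)%N -> j \in S.

Definition indicator (S : {set 'I_d.+1}) : pt := \row_i (i \in S)%:R.

Definition max_face (S : {set 'I_d.+1}) : set pt :=
  [set x | P x /\ forall t, dot (indicator S) (perm_vertex t) <= dot (indicator S) x].

Definition argmax_coords (c : pt) : {set 'I_d.+1} := [set i | [forall j, c 0 j <= c 0 i]]%SET.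

Lemma perm_vertex_mem s : P (perm_vertex s).
Proof. exact: conv_image_enum. Qed.

Lemma dot_perm_vertex (c : pt) s : dot c (perm_vertex s) = \sum_j c 0 j * (m (s j))%:R.
Proof. by apply: eq_bigr => j _; rewrite mxE. Qed.

Lemma exists_argmax_perm (c : pt) :
  exists s, forall t, dot c (perm_vertex t) <= dot c (perm_vertex s).
Proof.
case: (@arg_maxP _ R _ 1%g predT (fun t => dot c (perm_vertex t)) isT) => s _ s_max.
by exists s => t; apply: s_max.
Qed.

(* Exchange argument: composing with the transposition of [i] and [j] would
   increase [c] otherwise. *)
Lemma argmax_perm_lt (c : pt) s :
  (forall t, dot c (perm_vertex t) <= dot c (perm_vertex s)) ->
  forall i j, c 0 i < c 0 j -> (s i < s j)%N.
Proof.
move=> s_max i j cij; rewrite ltnNge; apply/negP => le_ji.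
have ij : i != j by apply: contraTneq cij => ->; rewrite ltxx.
have lt_ji : (s j < s i)%N.
  rewrite ltn_neqAle le_ji andbT; apply: contra ij => /eqP /val_inj /perm_inj ->.
  by [].
have := s_max (tperm i j * s)%g; rewrite !dot_perm_vertex.
rewrite (reindex_inj (@perm_inj _ (tperm i j))) /=.
under eq_bigr => x _ do rewrite permM tpermK.
rewrite -subr_ge0 -sumrB (bigD1 i) //= (bigD1 j) /=; last by rewrite eq_sym.
rewrite big1 => [|x /andP [xi xj]]; last by rewrite tpermD 1?eq_sym // subrr.
rewrite tpermL tpermR addr0.
have dc : 0 < c 0 j - c 0 i by rewrite subr_gt0.
have dm : 0 < (m (s i))%:R - (m (s j))%:R :> R by rewrite subr_gt0 ltr_nat m_mono.
have := mulr_gt0 dc dm; nra.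
Qed.

Lemma upper_set_total s S S' :
  upper_set s S -> upper_set s S' -> S \subset S' \/ S' \subset S.
Proof.
move=> upS upS'; case: (boolP (S \subset S')) => [| /fintype.subsetPn [i iS iS']].
  by left.
right; apply/fintype.subsetP => j jS'; case: (ltngtP (s i) (s j)) => [lt | lt | eq].
- exact: upS lt.
- by move: iS'; rewrite (upS' _ _ jS' lt).
- by move: iS'; rewrite (perm_inj (val_inj eq)) jS'.
Qed.

Lemma upper_set_imset s S : upper_set s S -> upper_set 1 (s @: S).
Proof.
move=> upS r r' /imsetP [i iS ->]; rewrite !perm1 => lt.
by rewrite -(permKV s r'); apply: imset_f; apply: upS iS _; rewrite permKV.
Qed.

Lemma upper_set1_card U U' :
  upper_set 1 U -> upper_set 1 U' -> #|U| = #|U'| -> U = U'.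
Proof.
move=> upU upU' card_eq; apply/eqP; case: (upper_set_total upU upU') => sub.
  by rewrite eqEcard sub card_eq leqnn.
by rewrite eq_sym eqEcard sub card_eq leqnn.
Qed.

Lemma dot_indicator_perm S s :
  dot (indicator S) (perm_vertex s) = \sum_(i in S) (m (s i))%:R.
Proof.
rewrite dot_perm_vertex [RHS]big_mkcond; apply: eq_bigr => i _; rewrite mxE.
by case: (i \in S); rewrite ?mul1r ?mul0r.
Qed.

(* Both sums run over the top [#|S|] values of [m]. *)
Lemma dot_indicator_upper s s' S : upper_set s S -> upper_set s' S ->
  dot (indicator S) (perm_vertex s) = dot (indicator S) (perm_vertex s').
Proof.
move=> upS upS'; rewrite !dot_indicator_perm.
rewrite -(big_imset (fun r => (m r)%:R) (in2W (@perm_inj _ s))).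
rewrite -(big_imset (fun r => (m r)%:R) (in2W (@perm_inj _ s'))).
suff -> : s @: S = s' @: S by [].
apply: upper_set1_card; try exact: upper_set_imset.
by rewrite !card_imset //; exact: perm_inj.
Qed.

Lemma upper_set_of_argmax S s :
  (forall t, dot (indicator S) (perm_vertex t) <= dot (indicator S) (perm_vertex s)) ->
  upper_set s S.
Proof.
move=> s_max i j iS lt_ij; apply: contraT => jS.
have := argmax_perm_lt s_max (i := j) (j := i); rewrite !mxE iS (negbTE jS) ltr01.
by move=> /(_ isT); rewrite ltnNge ltnW.
Qed.

Lemma max_faceE S : exists b, (forall x, P x -> dot (indicator S) x <= b) /\
  max_face S = [set x | P x /\ dot (indicator S) x = b].
Proof.
have [s s_max] := exists_argmax_perm (indicator S).
have le_s x : P x -> dot (indicator S) x <= dot (indicator S) (perm_vertex s).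
  by apply: conv_dot_le => u; have [t ->] := nth_image_enum u; exact: s_max.
exists (dot (indicator S) (perm_vertex s)); split => //.
apply/seteqP; split => x /= [Px x_max]; split => //.
  by apply/eqP; rewrite eq_le le_s // x_max.
by move=> t; rewrite x_max.
Qed.

Lemma max_face_face S : is_face P (max_face S).
Proof. by have [b [le_b E]] := max_faceE S; exists (indicator S), b. Qed.

Lemma max_face_vertex S s : max_face S (perm_vertex s) <-> upper_set s S.
Proof.
split=> [[_ s_max] | upS]; first exact: upper_set_of_argmax.
split=> [|t]; first exact: perm_vertex_mem.
have [s' s'_max] := exists_argmax_perm (indicator S).
by rewrite (dot_indicator_upper upS (upper_set_of_argmax s'_max)).
Qed.

Lemma max_face_neq (S : {set 'I_d.+1}) i j : i \in S -> j \notin S -> max_face S <> P.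
Proof.
move=> iS jS E.
have up t : upper_set t S by apply/max_face_vertex; rewrite E; exact: perm_vertex_mem.
have [lt | gt | /val_inj eq_ij] := ltngtP i j.
- by move: jS; rewrite (up 1%g i j iS) // !perm1.
- by move: jS; rewrite (up (tperm i j) i j iS) // tpermL tpermR.
- by move: jS; rewrite -eq_ij iS.
Qed.

Lemma upper_set_argmax_coords (c : pt) b s : (forall x, P x -> dot c x <= b) ->
  dot c (perm_vertex s) = b -> upper_set s (argmax_coords c).
Proof.
move=> le_b cs i j; rewrite !inE => /forallP i_max lt_ij.
apply/forallP => k; rewrite leNgt; apply/negP => lt_jk.
have s_max t : dot c (perm_vertex t) <= dot c (perm_vertex s).
  by rewrite cs; apply: le_b; exact: perm_vertex_mem.
have := argmax_perm_lt s_max (lt_le_trans lt_jk (i_max k)).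
by rewrite ltnNge ltnW.
Qed.

Lemma perm_face_sub_max_face F (c : pt) b : (forall x, P x -> dot c x <= b) ->
  F = [set x | P x /\ dot c x = b] -> F `<=` max_face (argmax_coords c).
Proof.
move=> le_b FE; have faceF : is_face P F by exists c, b.
have [b' [_ ME]] := max_faceE (argmax_coords c).
move=> x Fx; rewrite ME; split; first exact: face_sub faceF _ Fx.
apply: (face_dot_eq faceF) Fx => u; have [s ->] := nth_image_enum u.
rewrite FE => -[_ /(upper_set_argmax_coords le_b) /max_face_vertex].
by rewrite ME => -[].
Qed.

Lemma perm_face_const F (c : pt) b a : (forall x, P x -> dot c x <= b) ->
  F = [set x | P x /\ dot c x = b] -> F !=set0 -> (forall j, c 0 j = a) -> F = P.
Proof.
move=> le_b FE [x Fx] c_const; have faceF : is_face P F by exists c, b.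
have cst t : dot c (perm_vertex t) = a * \sum_j (m j)%:R.
  rewrite dot_perm_vertex mulr_sumr [RHS](reindex_inj (@perm_inj _ t)) /=.
  by apply: eq_bigr => j _; rewrite c_const.
have [u [Fu _]] := faces_meet_at_nth faceF faceF Fx Fx.
apply: (face_eq_conv faceF) => u'; move: Fu; rewrite FE => -[_].
have [s ->] := nth_image_enum u; have [t ->] := nth_image_enum u'.
by rewrite !cst => cb; split; [exact: perm_vertex_mem | rewrite cst].
Qed.

Lemma perm_facetP F : is_facet P F -> F = set0 \/ exists S, F = max_face S.
Proof.
move=> [faceF [neP maxF]]; have := faceF => -[c [b [le_b FE]]].
case: (pselect (F !=set0)) => [F_neq0 | F0]; last first.
  by left; apply/seteqP; split => // y Fy; apply: F0; exists y.
right; have [E | E] := maxF _ (max_face_face _) (perm_face_sub_max_face le_b FE).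
  by exists (argmax_coords c).
case: (@arg_maxP _ R _ ord0 predT (fun i => c 0 i) isT) => imax _ imax_max.
have iS : imax \in argmax_coords c by rewrite inE; apply/forallP => j; exact: imax_max.
case: (pselect (exists j, j \notin argmax_coords c)) => [[j jS] | all_max].
  by case: (max_face_neq iS jS E).
exfalso; apply/neP/(perm_face_const le_b FE F_neq0 (a := c 0 imax)) => j.
apply/eqP; rewrite eq_le; apply/andP; split; first exact: imax_max.
have : j \in argmax_coords c by apply: contrapT => jS; apply: all_max; exists j; exact/negP.
by rewrite inE => /forallP.
Qed.

(* Rank each index by the number of members of the chain containing it. *)
Lemma chain_upper_sets k (S : 'I_k -> {set 'I_d.+1}) :
  (forall j j', S j \subset S j' \/ S j' \subset S j) ->
  exists s, forall j, upper_set s (S j).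
Proof.
move=> chain; pose rank : pt := \row_i #|[set l | i \in S l]%SET|%:R.
have [s s_max] := exists_argmax_perm rank; exists s => j i i' iS lt_ii'.
apply: contraT => i'S.
have lt_rank : (#|[set l | i' \in S l]%SET| < #|[set l | i \in S l]%SET|)%N.
  apply: proper_card; rewrite properE; apply/andP; split.
    apply/fintype.subsetP => l; rewrite !inE => i'l.
    case: (chain l j) => /fintype.subsetP sub; last exact: sub.
    by move: i'S; rewrite (sub _ i'l).
  by apply/fintype.subsetPn; exists j; rewrite !inE.
have := argmax_perm_lt s_max (i := i') (j := i); rewrite !mxE ltr_nat.
by move=> /(_ lt_rank); rewrite ltnNge (ltnW lt_ii').
Qed.

Lemma perm_facets_meet k (f : 'I_k -> set pt) : (1 < k)%N ->
  (forall i, is_facet P (f i)) ->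
  (forall j j', j != j' -> exists x, f j x /\ f j' x) -> fjoin P f setT !=set0.
Proof.
move=> lt1k f_facet meet.
have max_f j : exists S, f j = max_face S.
  case: (perm_facetP (f_facet j)) => [f0 | //].
  have [j'] := exists_ord_notin (s := [:: j]) lt1k; rewrite inE eq_sym => jj'.
  by have [x [fx _]] := meet j j' jj'; rewrite f0 in fx.
have [S ES] := choice max_f.
have [s up_s] : exists s, forall j, upper_set s (S j).
  apply: chain_upper_sets => j j'; have [<- | jj'] := eqVneq j j'; first by left.
  have [x [fx fx']] := meet j j' jj'; rewrite !ES in fx fx'.
  have [u []] := faces_meet_at_nth (max_face_face _) (max_face_face _) fx fx'.
  have [t ->] := nth_image_enum u.
  by move=> /max_face_vertex upS /max_face_vertex upS'; exact: upper_set_total upS upS'.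
exists (perm_vertex s); split => [|j _]; first exact: perm_vertex_mem.
by rewrite ES; apply/max_face_vertex.
Qed.

Lemma perm_independent_le2 k (f : 'I_k -> set pt) :
  (forall i, is_facet P (f i)) -> independent P f -> fjoin P f setT = set0 ->
  (k <= 2)%N.
Proof.
by move=> f_facet; apply: independent_empty_join_le2 => lt1k; exact: perm_facets_meet.
Qed.

End Permutohedron.

Unset Implicit Arguments.

Theorem proposition3 (R : realType) :
  (* (1) *)
  (forall (n d : nat) (P : set 'rV[R]_n), simple_polytope P d ->
     forall v, is_vertex P v ->
       interval_boolean P v d /\
       (forall (k : nat) (f : 'I_k -> set 'rV[R]_n), injective f ->
          (forall i, is_facet P (f i)) ->
          fjoin P f setT <> set0 -> independent P f)) /\
  (* (2), the d-cube *)
  (forall (d k : nat) (f : 'I_k -> set 'rV[R]_d), injective f ->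
     (forall i, is_facet (@cube R d) (f i)) ->
     independent (@cube R d) f -> fjoin (@cube R d) f setT = set0 ->
     (k <= 2)%N) /\
  (* (2), the d-permutohedron, for integers 0 <= m_1 < ... < m_(d+1) *)
  (forall (d : nat) (m : 'I_d.+1 -> nat), (forall i j : 'I_d.+1, i < j -> m i < m j)%N ->
     forall (k : nat) (f : 'I_k -> set 'rV[R]_d.+1), injective f ->
     (forall i, is_facet (@permutohedron R d m) (f i)) ->
     independent (@permutohedron R d m) f ->
     fjoin (@permutohedron R d m) f setT = set0 ->
     (k <= 2)%N).
Proof.
split.
  move=> n d P simpleP v v_vertex; split; first exact: simple_interval_boolean.
  by move=> k f f_inj f_facet; exact: simple_independent simpleP f_inj f_facet.
split; first by move=> d k f _; exact: cube_independent_le2.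
by move=> d m m_mono k f _; exact: (perm_independent_le2 m_mono).
Qed.
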